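(* Consider Algorithm iR2N (described in the context) and suppose (A1)–(A7) hold. Then there exist an infinite index set $N\subseteq\mathbb{N}$ and, for each $k\in N$, an exact Cauchy step $s_{k,\mathrm{cp}}\in\operatorname{argmin}_s m_{\mathrm{cp}}(s;x_k,\nu_k^{-1})$ such that: (i) $\{\hat s_{k,\mathrm{cp}}\}_{k\in N}\to0$ and $\{s_{k,\mathrm{cp}}\}_{k\in N}\to0$; (ii) $\{s_k\}_{k\in N}\to0$; (iii) there exist $u_k\in\nabla f(x_k)+\partial\psi(s_{k,\mathrm{cp}};x_k)$, $k\in N$, with $\{u_k\}_{k\in N}\to0$.
   Context: Setting. $f:\mathbb{R}^n\to\mathbb{R}$ is continuously differentiable, $h:\mathbb{R}^n\to\mathbb{R}\cup\{+\infty\}$ is proper and lower semicontinuous; the problem is $\min_x f(x)+h(x)$. $\|\cdot\|$ is the Euclidean norm (spectral norm for matrices). For each $x$, approximations $\hat f(x)\in\mathbb{R}$ of $f(x)$ and $\hat\nabla f(x)\in\mathbb{R}^n$ of $\nabla f(x)$ are available. For each $x$, $\psi(\cdot;x):\mathbb{R}^n\to\mathbb{R}\cup\{+\infty\}$ is proper, lsc, satisfies $\psi(0;x)=h(x)$ and $\partial\psi(0;x)\subseteq\partial h(x)$ ($\partial$ = limiting subdifferential), and is uniformly prox-bounded: there is $\lambda>0$ such that for every $x$ and every $0<\lambda'<\lambda$, $w\mapsto\psi(w;x)+\tfrac{1}{2\lambda'}\|w\|^2$ is bounded below. Models: $\varphi_{\mathrm{cp}}(s;x)=\hat f(x)+\hat\nabla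 f(x)^Ts$; $m_{\mathrm{cp}}(s;x,\nu^{-1})=\varphi_{\mathrm{cp}}(s;x)+\tfrac12\nu^{-1}\|s\|^2+\psi(s;x)$; for a symmetric $B(x)\in\mathbb{R}^{n\times n}$, $\varphi(s;x)=\hat f(x)+\hat\nabla f(x)^Ts+\tfrac12 s^TB(x)s$ and $m(s;x,\sigma)=\varphi(s;x)+\tfrac12\sigma\|s\|^2+\psi(s;x)$. Algorithm iR2N. Constants: $\kappa_f,\kappa_\nabla>0$, $0<\gamma_3\le 1<\gamma_1\le\gamma_2$, $0<\hat\eta_1\le\hat\eta_2<1$, $0<\theta_1<1<\theta_2$, $\sigma_{\min}>4\kappa_f\theta_1\theta_2^2/(\hat\eta_1(1-\theta_1))$, $\sigma_0\ge\sigma_{\min}$, $x_0\in\mathbb{R}^n$. At iteration $k=0,1,\dots$: choose symmetric $B_k=B(x_k)$; set $\nu_k=\theta_1/(\|B_k\|+\sigma_k)$; compute $\hat s_{k,\mathrm{cp}}$ with $m_{\mathrm{cp}}(\hat s_{k,\mathrm{cp}};x_k,\nu_k^{-1})\le m_{\mathrm{cp}}(0;x_k,\nu_k^{-1})$ (an approximate minimizer of $m_{\mathrm{cp}}(\cdot;x_k,\nu_k^{-1})$ obtained by a descent procedure from $s=0$) and set $\hat\xi_{k,\mathrm{cp}}=(\varphi_{\mathrm{cp}}+\psi)(0;x_k)-(\varphi_{\mathrm{cp}}+\psi)(\hat s_{k,\mathrm{cp}};x_k)$; compute $s_k$ with $m(s_k;x_k,\sigma_k)\le m(\hat s_{k,\mathrm{cp}};x_k,\sigma_k)$;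 if $\|s_k\|>\theta_2\|\hat s_{k,\mathrm{cp}}\|$, reset $s_k=\hat s_{k,\mathrm{cp}}$ (these computations are repeated with refined $\hat f,\hat\nabla f$ until (A6) holds). Compute $$\hat\rho_k=\frac{\hat f(x_k)+h(x_k)-\hat f(x_k+s_k)-h(x_k+s_k)}{\varphi(0;x_k)+\psi(0;x_k)-\varphi(s_k;x_k)-\psi(s_k;x_k)},$$ where $\varphi(\cdot;x_k)$ uses $B_k$. If $\hat\rho_k\ge\hat\eta_1$ set $x_{k+1}=x_k+s_k$, else $x_{k+1}=x_k$. Choose $\sigma_{k+1}\in[\gamma_3\sigma_k,\sigma_k]$ if $\hat\rho_k\ge\hat\eta_2$, $\sigma_{k+1}\in[\sigma_k,\gamma_1\sigma_k]$ if $\hat\eta_1\le\hat\rho_k<\hat\eta_2$, $\sigma_{k+1}\in[\gamma_1\sigma_k,\gamma_2\sigma_k]$ if $\hat\rho_k<\hat\eta_1$; then reset $\sigma_{k+1}=\max(\sigma_{k+1},\sigma_{\min})$. Assumptions. (A1) $|f(x+s)-f(x)-\nabla f(x)^Ts|\le\tfrac12L\|s\|^2$ for all $x,s$, for some $L\ge0$. (A2) $\|B_k\|\le\kappa_B$ for all $k$, for some $\kappa_B>0$. (A3) $|\psi(s;x)-h(x+s)|\le\kappa_h\|s\|^2$ for all $x,s$, for some $\kappa_h>0$. (A4) For all $k$, $\varphi(0;x_k)+\psi(0;x_k)-(\varphi(s_k;x_k)+\psi(s_k;x_k))\ge(1-\theta_1)\hat\xi_{k,\mathrm{cp}}$. (A5)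 There is $\kappa_s\in(0,1]$ such that for all $k$ the set $\operatorname{argmin}_s m_{\mathrm{cp}}(s;x_k,\nu_k^{-1})$ is nonempty and $\|\hat s_{k,\mathrm{cp}}\|\ge\kappa_s\min\{\|s\|\mid s\in\operatorname{argmin}_{s'} m_{\mathrm{cp}}(s';x_k,\nu_k^{-1})\}$. (A6) For all $k$: $|f(x_k)-\hat f(x_k)|\le\kappa_f\|s_k\|^2$, $|f(x_k+s_k)-\hat f(x_k+s_k)|\le\kappa_f\|s_k\|^2$, $\|\nabla f(x_k)-\hat\nabla f(x_k)\|\le\kappa_\nabla\|s_k\|$. (A7) There is $(f+h)_{\mathrm{low}}\in\mathbb{R}$ with $(f+h)(x)\ge(f+h)_{\mathrm{low}}$ for all $x$. *)

From HB Require Import structures.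
From mathcomp Require Import all_boot all_order all_algebra.
From mathcomp Require Import boolp classical_sets cardinality reals constructive_ereal.
Set Implicit Arguments. Unset Strict Implicit. Unset Printing Implicit Defensive.
Import Order.TTheory GRing.Theory Num.Theory.
Local Open Scope ring_scope.
Local Open Scope classical_set_scope.

Section Defs.
Variables (R : realType) (n : nat).
Local Notation vec := 'cV[R]_n.

Definition dotp (u v : vec) : R := \sum_i u i 0 * v i 0.
Definition enorm (u : vec) : R := Num.sqrt (\sum_i (u i 0) ^+ 2).

Definition opnorm (B : 'M[R]_n) : R :=
  sup [set enorm (B *m s) | s in [set s : vec | enorm s <= 1]].

Definition has_gradient (f : vec -> R) (g : vec -> vec) : Prop :=
  forall x eps, 0 < eps -> exists2 d, 0 < d & forall y, enorm (y - x) < d ->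
    `|f y - f x - dotp (g x) (y - x)| <= eps * enorm (y - x).
Definition vcontinuous (g : vec -> vec) : Prop :=
  forall x eps, 0 < eps -> exists2 d, 0 < d & forall y, enorm (y - x) < d ->
    enorm (g y - g x) < eps.
Definition C1_gradient (f : vec -> R) (g : vec -> vec) : Prop :=
  has_gradient f g /\ vcontinuous g.

Definition proper_fun (h : vec -> \bar R) : Prop :=
  (forall x, h x != -oo%E) /\ exists x, (h x < +oo)%E.
Definition lsc_fun (h : vec -> \bar R) : Prop :=
  forall x (a : R), (a%:E < h x)%E -> exists2 d, 0 < d &
    forall y, enorm (y - x) < d -> (a%:E < h y)%E.

Definition vseq_cvg (u : nat -> vec) (l : vec) : Prop :=
  forall eps, 0 < eps -> exists K, forall j, (K <= j)%N -> enorm (u j - l) < eps.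
Definition rseq_cvg (u : nat -> R) (l : R) : Prop :=
  forall eps, 0 < eps -> exists K, forall j, (K <= j)%N -> `|u j - l| < eps.
Definition cvg0_along (N : set nat) (u : nat -> vec) : Prop :=
  forall eps, 0 < eps -> exists K, forall k, N k -> (K <= k)%N -> enorm (u k) < eps.

Definition frechet_subdiff (h : vec -> \bar R) (x v : vec) : Prop :=
  h x \is a fin_num /\
  forall eps, 0 < eps -> exists2 d, 0 < d & forall y, enorm (y - x) < d ->
    ((fine (h x) + dotp v (y - x) - eps * enorm (y - x))%:E <= h y)%E.
Definition limiting_subdiff (h : vec -> \bar R) (x v : vec) : Prop :=
  h x \is a fin_num /\
  exists xs vs : nat -> vec,
    (forall j, frechet_subdiff h (xs j) (vs j)) /\ vseq_cvg xs x /\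
    rseq_cvg (fun j => fine (h (xs j))) (fine (h x)) /\ vseq_cvg vs v.

Definition argmin (F : vec -> \bar R) : set vec :=
  [set s | forall t, (F s <= F t)%E].

(* models; psi s x stands for psi(s; x) *)
Definition phi_cp (fh : R) (gh : vec) (s : vec) : R := fh + dotp gh s.
Definition m_cp (psi : vec -> vec -> \bar R) (x : vec) (fh : R) (gh : vec)
  (nuinv : R) (s : vec) : \bar R :=
  ((phi_cp fh gh s + nuinv / 2 * enorm s ^+ 2)%:E + psi s x)%E.
Definition phi_q (fh : R) (gh : vec) (B : 'M[R]_n) (s : vec) : R :=
  fh + dotp gh s + dotp s (B *m s) / 2.
Definition m_q (psi : vec -> vec -> \bar R) (x : vec) (fh : R) (gh : vec)
  (B : 'M[R]_n) (sigma : R) (s : vec) : \bar R :=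
  ((phi_q fh gh B s + sigma / 2 * enorm s ^+ 2)%:E + psi s x)%E.

Definition xi_cp (psi : vec -> vec -> \bar R) (x : vec) (fh : R) (gh : vec)
  (shat : vec) : \bar R :=
  (((phi_cp fh gh (0%R : vec))%:E + psi (0%R : vec) x) - ((phi_cp fh gh shat)%:E + psi shat x))%E.
Definition model_decrease (psi : vec -> vec -> \bar R) (x : vec) (fh : R)
  (gh : vec) (B : 'M[R]_n) (s : vec) : \bar R :=
  (((phi_q fh gh B (0%R : vec))%:E + psi (0%R : vec) x) - ((phi_q fh gh B s)%:E + psi s x))%E.
Definition rho_hat (h : vec -> \bar R) (psi : vec -> vec -> \bar R) (x : vec)
  (fh0 fh1 : R) (gh : vec) (B : 'M[R]_n) (s : vec) : R :=
  fine (((fh0%:E + h x) - (fh1%:E + h (x + s)%R))%E) /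
  fine (model_decrease psi x fh0 gh B s).

(* one run of Algorithm iR2N: iterates x_k, regularization sigma_k, the inexact
   values fh0 k = fhat(x_k), fh1 k = fhat(x_k + s_k), gh k = grad-hat f(x_k)
   (final values after refinement), the approximate Cauchy step shat k and
   the step s k. *)
Definition iR2N_run (h : vec -> \bar R) (psi : vec -> vec -> \bar R)
  (Bfun : vec -> 'M[R]_n) (gam3 gam1 gam2 eta1 eta2 th1 th2 smin : R)
  (x : nat -> vec) (sigma : nat -> R) (fh0 fh1 : nat -> R) (gh : nat -> vec)
  (shat s : nat -> vec) : Prop :=
  smin <= sigma 0%N /\
  forall k : nat,
    let Bk := Bfun (x k) in
    let nuk := th1 / (opnorm Bk + sigma k) in
    let rhok := rho_hat h psi (x k) (fh0 k) (fh1 k) (gh k) Bk (s k) in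
    (m_cp psi (x k) (fh0 k) (gh k) nuk^-1 (shat k)
       <= m_cp psi (x k) (fh0 k) (gh k) nuk^-1 (0%R : vec))%E /\
    (exists s' : vec,
       (m_q psi (x k) (fh0 k) (gh k) Bk (sigma k) s'
          <= m_q psi (x k) (fh0 k) (gh k) Bk (sigma k) (shat k))%E /\
       s k = if th2 * enorm (shat k) < enorm s' then shat k else s') /\
    x k.+1 = (if eta1 <= rhok then x k + s k else x k) /\
    exists sig' : R,
      (eta2 <= rhok -> gam3 * sigma k <= sig' <= sigma k) /\
      (eta1 <= rhok < eta2 -> sigma k <= sig' <= gam1 * sigma k) /\
      (rhok < eta1 -> gam1 * sigma k <= sig' <= gam2 * sigma k) /\
      sigma k.+1 = Num.max sig' smin.

End Defs.

From HB Require Import structures.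
From mathcomp Require Import all_boot all_order all_algebra.
From mathcomp Require Import boolp classical_sets cardinality reals constructive_ereal.
From mathcomp Require Import ring lra.
Import Order.TTheory GRing.Theory Num.Theory.
Local Open Scope ring_scope.
Local Open Scope classical_set_scope.

(* Every accepted step decreases [f + h] by at least [decrease_coef * |shat_k|^2]:
   by (A4) and the Cauchy decrease the model decrease dominates
   [(1 - th1) sigma_k / (2 th1) |shat_k|^2], while the inexact evaluations (A6)
   cost at most [2 kf th2^2 |shat_k|^2]; the lower bound on [smin] makes the
   difference positive.  As [f + h] is bounded below, [shat_k -> 0] along the
   accepted iterations.  If [shat_k] is eventually nonzero, a large [sigma_k]
   forces very successful steps, so accepted steps recur infinitely often and
   [sigma_k] stays bounded; otherwise the iterations with [shat_k = 0] form the
   subsequence.  By (A5) some exact Cauchy step [scp_k] has norm at most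
   [|shat_k| / ks] up to a vanishing slack, and first-order optimality of
   [scp_k] yields the subgradient [g x_k - gh_k - nu_k^-1 scp_k] of norm
   [O(|shat_k|)]. *)

Section Euclidean.
Context {R : realType} {n : nat}.
Local Notation vec := 'cV[R]_n.
Implicit Types (u v w t : vec) (B : 'M[R]_n).

Lemma dotpC u v : dotp u v = dotp v u.
Proof. by apply: eq_bigr => i _; rewrite mulrC. Qed.

Lemma dotpDl u v w : dotp (u + v) w = dotp u w + dotp v w.
Proof. by rewrite /dotp -big_split; apply: eq_bigr => i _; rewrite !mxE mulrDl. Qed.

Lemma dotpZl a u v : dotp (a *: u) v = a * dotp u v.
Proof. by rewrite /dotp mulr_sumr; apply: eq_bigr => i _; rewrite !mxE mulrA. Qed.

Lemma dotpNl u v : dotp (- u) v = - dotp u v.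
Proof. by rewrite -scaleN1r dotpZl mulN1r. Qed.

Lemma dotpBl u v w : dotp (u - v) w = dotp u w - dotp v w.
Proof. by rewrite dotpDl dotpNl. Qed.

Lemma dotpDr u v w : dotp w (u + v) = dotp w u + dotp w v.
Proof. by rewrite dotpC dotpDl !(dotpC w). Qed.

Lemma dotpZr a u v : dotp v (a *: u) = a * dotp v u.
Proof. by rewrite dotpC dotpZl dotpC. Qed.

Lemma dotpBr u v w : dotp w (u - v) = dotp w u - dotp w v.
Proof. by rewrite !(dotpC w) dotpBl. Qed.

Lemma dotp0l v : dotp 0 v = 0.
Proof. by rewrite /dotp big1 // => i _; rewrite mxE mul0r. Qed.

Lemma dotp0r v : dotp v 0 = 0.
Proof. by rewrite dotpC dotp0l. Qed.

Lemma dotpp_ge0 u : 0 <= dotp u u.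
Proof. by rewrite /dotp sumr_ge0 // => i _; rewrite -expr2 sqr_ge0. Qed.

Lemma dotpp_eq0 u : dotp u u = 0 -> u = 0.
Proof.
move=> u0; apply/matrixP => i j; rewrite (ord1 j) mxE.
have sq_ge0 k : true -> 0 <= u k 0 * u k 0 by rewrite -expr2 sqr_ge0.
by move: (psumr_eq0P sq_ge0 u0) => /(_ i isT)/eqP; rewrite mulf_eq0 orbb => /eqP.
Qed.

Lemma enorm_sqr u : enorm u ^+ 2 = dotp u u.
Proof.
rewrite /enorm sqr_sqrtr; last by rewrite sumr_ge0 // => i _; rewrite sqr_ge0.
by apply: eq_bigr => i _; rewrite expr2.
Qed.

Lemma enorm_ge0 u : 0 <= enorm u.
Proof. exact: sqrtr_ge0. Qed.

Lemma enorm_eq0 u : enorm u = 0 -> u = 0.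
Proof. by move=> u0; apply: dotpp_eq0; rewrite -enorm_sqr u0 expr0n. Qed.

Lemma enorm0 : enorm (0 : vec) = 0.
Proof. by rewrite /enorm big1 ?sqrtr0 // => i _; rewrite mxE expr0n. Qed.

Lemma cauchy_schwarz_sqr u v : dotp u v ^+ 2 <= dotp u u * dotp v v.
Proof.
have [uu0|uu0] := eqVneq (dotp u u) 0.
  by rewrite (dotpp_eq0 _ uu0) !dotp0l expr0n mul0r.
have uu_gt0 : 0 < dotp u u by rewrite lt0r uu0 dotpp_ge0.
have := dotpp_ge0 ((dotp u v / dotp u u) *: u - v).
rewrite dotpBl !dotpBr !dotpZl !dotpZr (dotpC v u).
set a := dotp u u; set b := dotp u v; set c := dotp v v.
have -> : b / a * (b / a * a) - b / a * b - (b / a * b - c) = (a * c - b ^+ 2) / a.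
  by field; rewrite gt_eqF.
by rewrite pmulr_lge0 ?invr_gt0 // subr_ge0.
Qed.

Lemma cauchy_schwarz u v : `|dotp u v| <= enorm u * enorm v.
Proof.
rewrite -(@ler_pXn2r _ 2) ?nnegrE ?mulr_ge0 ?enorm_ge0 //.
by rewrite exprMn !enorm_sqr real_normK ?num_real // cauchy_schwarz_sqr.
Qed.

Lemma enormZ a u : enorm (a *: u) = `|a| * enorm u.
Proof.
apply/eqP; rewrite -(@eqrXn2 _ 2) ?mulr_ge0 ?enorm_ge0 //.
by rewrite exprMn !enorm_sqr dotpZl dotpZr mulrA -expr2 real_normK ?num_real.
Qed.

Lemma enormN u : enorm (- u) = enorm u.
Proof. by rewrite -scaleN1r enormZ normrN1 mul1r. Qed.

Lemma ler_enormD u v : enorm (u + v) <= enorm u + enorm v.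
Proof.
rewrite -(@ler_pXn2r _ 2) ?nnegrE ?addr_ge0 ?enorm_ge0 //.
rewrite enorm_sqr dotpDl !dotpDr sqrrD !enorm_sqr (dotpC v u).
have := cauchy_schwarz u v; have := ler_norm (dotp u v); lra.
Qed.

Lemma ler_enormB u v : enorm (u - v) <= enorm u + enorm v.
Proof. by rewrite -(enormN v) ler_enormD. Qed.

Lemma mulmx_dotp_row B t i : (B *m t) i 0 = dotp (row i B)^T t.
Proof. by rewrite mxE; apply: eq_bigr => j _; rewrite !mxE. Qed.

Lemma has_sup_opnorm B :
  has_sup [set enorm (B *m t) | t in [set t : vec | enorm t <= 1]].
Proof.
split; first by exists (enorm (B *m 0)), 0 => //=; rewrite enorm0 ler01.
exists (Num.sqrt (\sum_i dotp (row i B)^T (row i B)^T)) => _ [t /= t1 <-].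
rewrite -(@ler_pXn2r _ 2) ?nnegrE ?enorm_ge0 ?sqrtr_ge0 //.
rewrite [X in _ <= X]sqr_sqrtr; last by rewrite sumr_ge0 // => i _; exact: dotpp_ge0.
rewrite enorm_sqr /dotp; apply: ler_sum => i _.
rewrite mulmx_dotp_row -expr2; apply: (le_trans (cauchy_schwarz_sqr _ _)).
rewrite ler_piMr ?dotpp_ge0 // -enorm_sqr.
have := enorm_ge0 t; nra.
Qed.

Lemma opnorm_ge0 B : 0 <= opnorm B.
Proof.
apply: le_trans (sup_upper_bound (has_sup_opnorm B) _); last first.
  by exists 0; rewrite //= enorm0 ler01.
by rewrite mulmx0 enorm0.
Qed.

Lemma enorm_mulmx_le B t : enorm (B *m t) <= opnorm B * enorm t.
Proof.
have [t0|t_neq0] := eqVneq (enorm t) 0.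
  by rewrite (enorm_eq0 _ t0) mulmx0 enorm0 mulr0.
have t_gt0 : 0 < enorm t by rewrite lt0r t_neq0 enorm_ge0.
have unit_t : enorm ((enorm t)^-1 *: t) <= 1.
  by rewrite enormZ ger0_norm ?invr_ge0 ?enorm_ge0 // mulVf.
have := sup_upper_bound (has_sup_opnorm B) (ex_intro2 _ _ ((enorm t)^-1 *: t) unit_t erefl).
rewrite -scalemxAr enormZ ger0_norm ?invr_ge0 ?enorm_ge0 //.
by rewrite mulrC -ler_pdivlMr ?invr_gt0 // invrK.
Qed.

Lemma dotp_mulmx_le B t : `|dotp t (B *m t)| <= opnorm B * enorm t ^+ 2.
Proof.
apply: le_trans (cauchy_schwarz _ _) _.
by rewrite mulrC expr2 mulrA ler_wpM2r ?enorm_ge0 ?enorm_mulmx_le.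
Qed.

End Euclidean.

Lemma fin_num_le {R : realType} (y z : \bar R) :
  (y <= z)%E -> z \is a fin_num -> y != -oo%E -> y \is a fin_num.
Proof. by case: z => // z; case: y. Qed.

Lemma fin_num_EFinD_le {R : realType} (r : R) (y z : \bar R) :
  (r%:E + y <= z)%E -> z \is a fin_num -> y != -oo%E -> y \is a fin_num.
Proof. by case: z => // z; case: y. Qed.

Lemma infinite_set_of_unbounded (N : set nat) :
  (forall K, exists2 k, (K <= k)%N & N k) -> infinite_set N.
Proof.
move=> N_unbounded /finite_seqP[l Nl].
have [k + Nk] := N_unbounded (\max_(i <- l) i).+1.
have kl : k \in l by move: Nk; rewrite Nl.
by rewrite ltnNge (@leq_bigmax_seq _ _ xpredT id _ kl).
Qed.

Section RealFacts.
Context {R : realType}.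

Lemma exists_nat_gt (r : R) : exists j : nat, r < j%:R.
Proof.
have r0 : 0 <= Num.max r 0 by rewrite le_max lexx orbT.
by exists (Num.bound (Num.max r 0)); apply: le_lt_trans (archi_boundP r0); rewrite le_max lexx.
Qed.

Lemma bernoulli_le (q : R) j : 0 <= q -> 1 + j%:R * (q - 1) <= q ^+ j.
Proof.
move=> q0; elim: j => [|j IH]; first by rewrite mul0r addr0 expr0.
rewrite exprS -natr1; apply: le_trans (ler_wpM2l q0 IH).
have -> : q * (1 + j%:R * (q - 1)) = 1 + (j%:R + 1) * (q - 1) + j%:R * (q - 1) ^+ 2.
  by ring.
by rewrite lerDl mulr_ge0 ?sqr_ge0.
Qed.

Lemma expr_unbounded (q r : R) : 1 < q -> exists j : nat, r < q ^+ j.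
Proof.
move=> q1; have [j rj] := exists_nat_gt (r / (q - 1)).
exists j; apply: lt_le_trans (bernoulli_le q j (ltW (lt_trans ltr01 q1))).
by move: rj; rewrite ltr_pdivrMr ?subr_gt0 //; lra.
Qed.

Lemma rseq_cvg_invn : rseq_cvg (fun k : nat => (k.+1%:R)^-1 : R) 0.
Proof.
move=> eps eps_gt0; have [K epsK] := exists_nat_gt eps^-1.
exists K => k Kk; rewrite subr0 ger0_norm ?invr_ge0 // -(invrK eps).
rewrite ltf_pV2 ?posrE ?invr_gt0 ?ltr0Sn //; apply: lt_le_trans epsK _.
by rewrite ler_nat (leq_trans Kk).
Qed.

End RealFacts.

Section VectorSequences.
Context {R : realType} {n : nat}.
Local Notation vec := 'cV[R]_n.

Lemma cvg0_along_le {N : set nat} {z w : nat -> vec} {M : R} {e : nat -> R} :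
  0 <= M -> rseq_cvg e 0 ->
  (forall k, N k -> enorm (z k) <= M * enorm (w k) + e k) ->
  cvg0_along N w -> cvg0_along N z.
Proof.
move=> M0 e0 z_le w0 eps eps_gt0.
have d_gt0 : 0 < eps / (2 * (M + 1)) by rewrite divr_gt0 // mulr_gt0 //; lra.
have [K1 wK1] := w0 _ d_gt0.
have [K2 eK2] := e0 (eps / 2) (divr_gt0 eps_gt0 (ltr0Sn _ 1)).
exists (maxn K1 K2) => k Nk Kk.
have k1 := leq_trans (leq_maxl K1 K2) Kk; have k2 := leq_trans (leq_maxr K1 K2) Kk.
have Mw : M * enorm (w k) <= eps / 2.
  apply: le_trans (ler_wpM2l M0 (ltW (wK1 k Nk k1))) _.
  have : eps / 2 - M * (eps / (2 * (M + 1))) = eps / (2 * (M + 1)).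
    by field; rewrite gt_eqF //; lra.
  by move: d_gt0; lra.
have := eK2 k k2; rewrite subr0 => /(le_lt_trans (ler_norm _)).
by have := z_le k Nk; lra.
Qed.

Lemma exists_enorm_near_inf {A : set vec} {c r e : R} :
  A !=set0 -> 0 < c -> c * inf [set enorm t | t in A] <= r -> 0 < e ->
  exists2 t, A t & enorm t <= r / c + e.
Proof.
move=> A0 c_gt0 c_inf e_gt0.
have inf_norm : has_inf [set enorm t | t in A].
  split; first by case: A0 => t At; exists (enorm t), t.
  by exists 0 => _ [t _ <-]; exact: enorm_ge0.
have [_ [t At <-] t_lt] := inf_adherent e_gt0 inf_norm.
exists t => //; apply: ltW (lt_le_trans t_lt _).
by rewrite lerD2r ler_pdivlMr // mulrC.
Qed.

Lemma frechet_limiting_subdiff (h : vec -> \bar R) y v :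
  frechet_subdiff h y v -> limiting_subdiff h y v.
Proof.
move=> hv; split; first by case: hv.
exists (fun=> y), (fun=> v); split=> //.
by split; [|split] => eps eps_gt0; exists 0%N => j _; rewrite subrr ?enorm0 ?normr0.
Qed.

Lemma argmin_m_cp_frechet (psi : vec -> vec -> \bar R) y fh gh a t :
  psi t y \is a fin_num -> argmin (m_cp psi y fh gh a) t ->
  frechet_subdiff (psi^~ y) t (- gh - a *: t).
Proof.
move=> t_fin t_min; split => // eps eps_gt0.
have a1_gt0 : 0 < `|a| + 1 by rewrite ltr_wpDl.
exists (eps / (`|a| + 1)); first by rewrite divr_gt0.
move=> y'; have -> : y' = t + (y' - t) by rewrite addrC subrK.
move: (y' - t) => w; rewrite (addrC t w) addrK => w_small /=.
have := t_min (w + t); rewrite /m_cp /phi_cp -(fineK t_fin).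
case: (psi (w + t) y) => [r| |] //=; rewrite ?leey // -!EFinD !lee_fin.
rewrite (addrC w t) dotpDr !enorm_sqr dotpDl !dotpDr (dotpC w t) dotpBl dotpNl dotpZl.
have quad_le : a / 2 * dotp w w <= (`|a| + 1) * dotp w w.
  by rewrite ler_wpM2r ?dotpp_ge0 //; have := ler_norm a; have := normr_ge0 a; lra.
have quad_small : (`|a| + 1) * dotp w w <= eps * enorm w.
  rewrite -enorm_sqr expr2 mulrA ler_wpM2r ?enorm_ge0 //.
  by rewrite mulrC -ler_pdivlMr // ltW.
lra.
Qed.

End VectorSequences.

Section iR2N.
Variables (R : realType) (n : nat) (f : 'cV[R]_n -> R) (g : 'cV[R]_n -> 'cV[R]_n)
  (h : 'cV[R]_n -> \bar R) (psi : 'cV[R]_n -> 'cV[R]_n -> \bar R)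
  (Bfun : 'cV[R]_n -> 'M[R]_n) (kf kg gam3 gam1 gam2 eta1 eta2 th1 th2 smin : R)
  (x : nat -> 'cV[R]_n) (sigma : nat -> R) (fh0 fh1 : nat -> R)
  (gh : nat -> 'cV[R]_n) (shat s : nat -> 'cV[R]_n) (L kB kh ks low : R).
Local Notation vec := 'cV[R]_n.

Hypothesis h_neq_Noo : forall y, h y != -oo%E.
Hypothesis psi_neq_Noo : forall y w, psi w y != -oo%E.
Hypothesis psi0 : forall y, psi 0 y = h y.
Hypothesis kf_gt0 : 0 < kf.
Hypothesis kg_gt0 : 0 < kg.
Hypothesis gam12 : 1 < gam1 <= gam2.
Hypothesis eta12 : 0 < eta1 <= eta2.
Hypothesis eta2_lt1 : eta2 < 1.
Hypothesis th1_01 : 0 < th1 < 1.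
Hypothesis th2_gt1 : 1 < th2.
Hypothesis smin_large : 4 * kf * th1 * th2 ^+ 2 / (eta1 * (1 - th1)) < smin.
Hypothesis hx0_fin : h (x 0%N) \is a fin_num.
Hypothesis run : iR2N_run h psi Bfun gam3 gam1 gam2 eta1 eta2 th1 th2 smin
  x sigma fh0 fh1 gh shat s.
Hypothesis L_ge0 : 0 <= L.
Hypothesis A1 : forall y t, `|f (y + t) - f y - dotp (g y) t| <= L / 2 * enorm t ^+ 2.
Hypothesis kB_gt0 : 0 < kB.
Hypothesis A2 : forall k, opnorm (Bfun (x k)) <= kB.
Hypothesis kh_gt0 : 0 < kh.
Hypothesis A3 : forall y t,
  (psi t y <= h (y + t)%R + (kh * enorm t ^+ 2)%:E)%E /\
  (h (y + t)%R <= psi t y + (kh * enorm t ^+ 2)%:E)%E.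
Hypothesis A4 : forall k, ((1 - th1)%:E * xi_cp psi (x k) (fh0 k) (gh k) (shat k)
  <= model_decrease psi (x k) (fh0 k) (gh k) (Bfun (x k)) (s k))%E.
Hypothesis ks_gt0 : 0 < ks.
Hypothesis A5 : forall k,
  let A := argmin (m_cp psi (x k) (fh0 k) (gh k) (th1 / (opnorm (Bfun (x k)) + sigma k))^-1) in
  A !=set0 /\ ks * inf [set enorm t | t in A] <= enorm (shat k).
Hypothesis A6 : forall k,
  `|f (x k) - fh0 k| <= kf * enorm (s k) ^+ 2 /\
  `|f (x k + s k) - fh1 k| <= kf * enorm (s k) ^+ 2 /\
  enorm (g (x k) - gh k) <= kg * enorm (s k).
Hypothesis A7 : forall y, (low%:E <= (f y)%:E + h y)%E.

Definition nuinv k := (th1 / (opnorm (Bfun (x k)) + sigma k))^-1.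
Definition rho k := rho_hat h psi (x k) (fh0 k) (fh1 k) (gh k) (Bfun (x k)) (s k).

Lemma cauchy_step_le k : (m_cp psi (x k) (fh0 k) (gh k) (nuinv k) (shat k)
  <= m_cp psi (x k) (fh0 k) (gh k) (nuinv k) 0)%E.
Proof. by case: run => _ /(_ k) []. Qed.

Lemma step_def k : exists s' : vec,
  (m_q psi (x k) (fh0 k) (gh k) (Bfun (x k)) (sigma k) s'
    <= m_q psi (x k) (fh0 k) (gh k) (Bfun (x k)) (sigma k) (shat k))%E /\
  s k = if th2 * enorm (shat k) < enorm s' then shat k else s'.
Proof. by case: run => _ /(_ k) [_ []]. Qed.

Lemma iterate_next k : x k.+1 = (if eta1 <= rho k then x k + s k else x k).
Proof. by case: run => _ /(_ k) [_ [_ []]]. Qed.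

Lemma sigma_next k : exists sig' : R,
  [/\ eta2 <= rho k -> gam3 * sigma k <= sig' <= sigma k,
      eta1 <= rho k < eta2 -> sigma k <= sig' <= gam1 * sigma k,
      rho k < eta1 -> gam1 * sigma k <= sig' <= gam2 * sigma k &
      sigma k.+1 = Num.max sig' smin].
Proof. by case: run => _ /(_ k) [_ [_ [_ [sig' [? [? [? ?]]]]]]]; exists sig'. Qed.

Lemma smin_gt0 : 0 < smin.
Proof.
apply: le_lt_trans smin_large; case/andP: th1_01 => th1_gt0 th1_lt1.
case/andP: eta12 => eta1_gt0 _.
apply: divr_ge0; last by apply: mulr_ge0; lra.
by rewrite mulr_ge0 ?sqr_ge0 // !mulr_ge0 ?ler0n ?ltW.
Qed.

Lemma sigma_ge_smin k : smin <= sigma k.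
Proof.
case: k => [|k]; first by case: run.
by have [sig' [_ _ _ ->]] := sigma_next k; rewrite le_max lexx orbT.
Qed.

Lemma nuinvE k : nuinv k = (opnorm (Bfun (x k)) + sigma k) / th1.
Proof. by rewrite /nuinv invf_div. Qed.

Lemma nuinv_ge k : sigma k / th1 <= nuinv k.
Proof.
case/andP: th1_01 => th1_gt0 _.
by rewrite nuinvE ler_pM2r ?invr_gt0 // lerDr opnorm_ge0.
Qed.

Lemma nuinv_gt0 k : 0 < nuinv k.
Proof.
case/andP: th1_01 => th1_gt0 _; apply: lt_le_trans (nuinv_ge k).
by rewrite divr_gt0 // (lt_le_trans smin_gt0 (sigma_ge_smin k)).
Qed.

Lemma fin_num_step k : h (x k) \is a fin_num ->
  [/\ psi (shat k) (x k) \is a fin_num, psi (s k) (x k) \is a fin_num &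
      h (x k + s k) \is a fin_num].
Proof.
move=> hxk.
have psi_shat : psi (shat k) (x k) \is a fin_num.
  apply: fin_num_EFinD_le (cauchy_step_le k) _ (psi_neq_Noo _ _).
  by rewrite /m_cp psi0 fin_numD hxk.
have psi_s : psi (s k) (x k) \is a fin_num.
  have [s' [s'_le ->]] := step_def k; case: ifP => // _.
  apply: fin_num_EFinD_le s'_le _ (psi_neq_Noo _ _).
  by rewrite /m_q fin_numD psi_shat.
split=> //; apply: fin_num_le (A3 (x k) (s k)).2 _ (h_neq_Noo _).
by rewrite fin_numD psi_s.
Qed.

Lemma h_iterate_fin k : h (x k) \is a fin_num.
Proof.
elim: k => [|k IH]; first exact: hx0_fin.
by rewrite iterate_next; case: ifP => // _; case: (fin_num_step k IH).
Qed.

Definition hx k := fine (h (x k)).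
Definition hxs k := fine (h (x k + s k)).
Definition psis k := fine (psi (s k) (x k)).
Definition psish k := fine (psi (shat k) (x k)).

Lemma hxE k : h (x k) = (hx k)%:E.
Proof. by rewrite /hx fineK // h_iterate_fin. Qed.

Lemma hxsE k : h (x k + s k) = (hxs k)%:E.
Proof. by rewrite /hxs fineK //; case: (fin_num_step k (h_iterate_fin k)). Qed.

Lemma psisE k : psi (s k) (x k) = (psis k)%:E.
Proof. by rewrite /psis fineK //; case: (fin_num_step k (h_iterate_fin k)). Qed.

Lemma psishE k : psi (shat k) (x k) = (psish k)%:E.
Proof. by rewrite /psish fineK //; case: (fin_num_step k (h_iterate_fin k)). Qed.

Definition model_dec k :=
  hx k - dotp (gh k) (s k) - dotp (s k) (Bfun (x k) *m s k) / 2 - psis k.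
Definition actual_dec k := fh0 k + hx k - (fh1 k + hxs k).

Lemma rhoE k : rho k = actual_dec k / model_dec k.
Proof.
rewrite /rho /rho_hat /model_decrease /phi_q hxE hxsE psi0 hxE psisE.
rewrite -!EFinD /= mulmx0 !dotp0r mul0r !addr0 /actual_dec /model_dec.
by congr (_ / _); lra.
Qed.

Lemma cauchy_decrease k :
  dotp (gh k) (shat k) + nuinv k / 2 * enorm (shat k) ^+ 2 + psish k <= hx k.
Proof.
have := cauchy_step_le k; rewrite /m_cp /phi_cp psi0 hxE psishE -!EFinD lee_fin.
by rewrite dotp0r enorm0 expr0n /= mulr0 !addr0; lra.
Qed.

Lemma model_dec_ge_xi_cp k :
  (1 - th1) * (hx k - dotp (gh k) (shat k) - psish k) <= model_dec k.
Proof.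
have := A4 k; rewrite /xi_cp /model_decrease /phi_cp /phi_q psi0 hxE psishE psisE.
by rewrite -!EFinD -EFinM lee_fin mulmx0 !dotp0r mul0r !addr0 /model_dec; lra.
Qed.

Lemma enorm_step_le k : enorm (s k) <= th2 * enorm (shat k).
Proof.
have [s' [_ ->]] := step_def k; case: ltP => // _.
by rewrite ler_peMl ?enorm_ge0 // ltW.
Qed.

Lemma enorm_step_sqr_le k : enorm (s k) ^+ 2 <= th2 ^+ 2 * enorm (shat k) ^+ 2.
Proof.
rewrite -exprMn ler_pXn2r ?nnegrE ?enorm_ge0 ?enorm_step_le //.
by rewrite mulr_ge0 ?enorm_ge0 // ltW // (lt_trans ltr01 th2_gt1).
Qed.

Lemma model_dec_ge k : (1 - th1) / 2 * (sigma k / th1) * enorm (shat k) ^+ 2 <= model_dec k.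
Proof.
case/andP: th1_01 => _ th1_lt1; apply: le_trans _ (model_dec_ge_xi_cp k).
have -> : (1 - th1) / 2 * (sigma k / th1) * enorm (shat k) ^+ 2 =
          (1 - th1) * (sigma k / th1 / 2 * enorm (shat k) ^+ 2) by ring.
apply: ler_wpM2l; first by rewrite subr_ge0 ltW.
apply: (@le_trans _ _ (nuinv k / 2 * enorm (shat k) ^+ 2)); last first.
  by have := cauchy_decrease k; lra.
by rewrite ler_wpM2r ?sqr_ge0 // ler_wpM2r ?invr_ge0 ?ler0n ?nuinv_ge.
Qed.

Definition model_dec_coef := (1 - th1) / 2 * (smin / th1).
Definition decrease_coef := eta1 * model_dec_coef - 2 * kf * th2 ^+ 2.
Definition err_coef := 2 * kf + L / 2 + kg + kB / 2 + kh.
Definition sigma_thr :=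
  Num.max smin (2 * th1 * err_coef * th2 ^+ 2 / ((1 - th1) * (1 - eta2))).

Lemma model_dec_coef_gt0 : 0 < model_dec_coef.
Proof.
by case/andP: th1_01 => th1_gt0 th1_lt1; rewrite mulr_gt0 ?divr_gt0 ?subr_gt0 ?smin_gt0.
Qed.

Lemma model_dec_ge_coef k : model_dec_coef * enorm (shat k) ^+ 2 <= model_dec k.
Proof.
case/andP: th1_01 => th1_gt0 /ltW th1_le1; apply: le_trans _ (model_dec_ge k).
rewrite ler_wpM2r ?sqr_ge0 // ler_wpM2l ?divr_ge0 ?subr_ge0 //.
by rewrite ler_pM2r ?invr_gt0 // sigma_ge_smin.
Qed.

(* The lower bound imposed on [smin] is equivalent to this positivity. *)
Lemma decrease_coef_gt0 : 0 < decrease_coef.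
Proof.
case/andP: th1_01 => th1_gt0 th1_lt1; case/andP: eta12 => eta1_gt0 _.
have := smin_large; rewrite ltr_pdivrMr; last by apply: mulr_gt0; lra.
have -> : decrease_coef = (smin * (eta1 * (1 - th1)) - 4 * kf * th1 * th2 ^+ 2) / (2 * th1).
  by rewrite /decrease_coef /model_dec_coef; field; rewrite gt_eqF.
by rewrite -subr_gt0 => ?; rewrite divr_gt0 ?mulr_gt0.
Qed.

Lemma err_coef_ge0 : 0 <= err_coef.
Proof.
have := ltW kf_gt0; have := ltW kg_gt0; have := ltW kB_gt0; have := ltW kh_gt0.
by have := L_ge0; rewrite /err_coef; lra.
Qed.

Lemma actual_dec_ge k : model_dec k - err_coef * enorm (s k) ^+ 2 <= actual_dec k.
Proof.
have [/ler_normlP[f0_lo f0_hi] [/ler_normlP[f1_lo f1_hi] g_err]] := A6 k.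
have /ler_normlP[taylor_lo taylor_hi] := A1 (x k) (s k).
have /ler_normlP[grad_lo grad_hi] :
    `|dotp (g (x k)) (s k) - dotp (gh k) (s k)| <= kg * enorm (s k) ^+ 2.
  rewrite -dotpBl; apply: le_trans (cauchy_schwarz _ _) _.
  by rewrite expr2 mulrA ler_wpM2r ?enorm_ge0.
have /ler_normlP[quad_lo quad_hi] :
    `|dotp (s k) (Bfun (x k) *m s k)| <= kB * enorm (s k) ^+ 2.
  by apply: le_trans (dotp_mulmx_le _ _) _; rewrite ler_wpM2r ?sqr_ge0.
have [_ psi_hi] : psis k <= hxs k + kh * enorm (s k) ^+ 2 /\
                  hxs k <= psis k + kh * enorm (s k) ^+ 2.
  by have [] := A3 (x k) (s k); rewrite hxsE psisE -!EFinD !lee_fin.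
by have := L_ge0; rewrite /model_dec /actual_dec /err_coef; lra.
Qed.

Definition obj k := f (x k) + hx k.

Lemma successful_decrease k : eta1 <= rho k ->
  decrease_coef * enorm (shat k) ^+ 2 <= obj k - obj k.+1.
Proof.
move=> succ; case/andP: eta12 => eta1_gt0 _.
have x_next : x k.+1 = x k + s k by rewrite iterate_next succ.
have hx_next : hx k.+1 = hxs k by rewrite /hx /hxs x_next.
have model_dec_gt0 : 0 < model_dec k.
  have model_dec_ge0 : 0 <= model_dec k.
    apply: le_trans (model_dec_ge_coef k).
    by rewrite mulr_ge0 ?sqr_ge0 ?(ltW model_dec_coef_gt0).
  rewrite lt0r model_dec_ge0 andbT; apply: contraTneq succ; rewrite rhoE => ->.
  by rewrite invr0 mulr0 -ltNge.
move: succ; rewrite rhoE ler_pdivlMr // => succ.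
have [/ler_normlP[f0_lo f0_hi] [/ler_normlP[f1_lo f1_hi] _]] := A6 k.
have e1 : eta1 * (model_dec_coef * enorm (shat k) ^+ 2) <= eta1 * model_dec k.
  by apply: ler_wpM2l; [exact: ltW | exact: model_dec_ge_coef].
have e2 : kf * enorm (s k) ^+ 2 <= kf * (th2 ^+ 2 * enorm (shat k) ^+ 2).
  by apply: ler_wpM2l; [exact: ltW | exact: enorm_step_sqr_le].
have -> : decrease_coef * enorm (shat k) ^+ 2 =
  eta1 * (model_dec_coef * enorm (shat k) ^+ 2) - 2 * (kf * (th2 ^+ 2 * enorm (shat k) ^+ 2)).
  by rewrite /decrease_coef; ring.
by move: succ; rewrite /obj hx_next x_next /actual_dec; lra.
Qed.

Lemma very_successful k : sigma_thr <= sigma k -> shat k != 0 -> eta2 <= rho k.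
Proof.
move=> sigma_large shat_neq0; have eta2_lt1' := eta2_lt1.
case/andP: th1_01 => th1_gt0 th1_lt1.
set q := enorm (shat k) ^+ 2; set m := (1 - th1) / 2 * (sigma k / th1).
have sigma_gt0 : 0 < sigma k := lt_le_trans smin_gt0 (sigma_ge_smin k).
have q_gt0 : 0 < q.
  by rewrite exprn_gt0 // lt0r enorm_ge0 andbT; apply: contra shat_neq0 => /eqP/enorm_eq0 ->.
have m_gt0 : 0 < m by rewrite mulr_gt0 ?divr_gt0 ?subr_gt0.
have err_le : err_coef * th2 ^+ 2 <= (1 - eta2) * m.
  move: sigma_large; rewrite ge_max => /andP[_].
  rewrite ler_pdivrMr; last by apply: mulr_gt0; lra.
  move=> thr_le; rewrite -subr_ge0.
  have -> : (1 - eta2) * m - err_coef * th2 ^+ 2 =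
      (sigma k * ((1 - th1) * (1 - eta2)) - 2 * th1 * err_coef * th2 ^+ 2) / (2 * th1).
    by rewrite /m; field; rewrite gt_eqF.
  by rewrite divr_ge0 ?subr_ge0 //; lra.
have model_dec_q : m * q <= model_dec k := model_dec_ge k.
have model_dec_gt0 : 0 < model_dec k := lt_le_trans (mulr_gt0 m_gt0 q_gt0) model_dec_q.
have e1 : err_coef * enorm (s k) ^+ 2 <= err_coef * th2 ^+ 2 * q.
  by rewrite -mulrA ler_wpM2l ?err_coef_ge0 ?enorm_step_sqr_le.
have e2 : err_coef * th2 ^+ 2 * q <= (1 - eta2) * m * q.
  by apply: ler_wpM2r; [exact: ltW | exact: err_le].
have e3 : (1 - eta2) * m * q <= (1 - eta2) * model_dec k.
  by rewrite -mulrA ler_wpM2l // subr_ge0 ltW.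
by have := actual_dec_ge k; rewrite rhoE ler_pdivlMr //; lra.
Qed.

Lemma obj_next_le k : obj k.+1 <= obj k.
Proof.
have [succ|unsucc] := lerP eta1 (rho k).
  rewrite -subr_ge0; apply: le_trans _ (successful_decrease k succ).
  by rewrite mulr_ge0 ?sqr_ge0 ?(ltW decrease_coef_gt0).
have not_succ : (eta1 <= rho k) = false by rewrite leNgt unsucc.
by rewrite /obj /hx iterate_next not_succ.
Qed.

Lemma obj_le i j : (i <= j)%N -> obj j <= obj i.
Proof.
move=> /subnK <-; elim: (j - i)%N => [|d IH]; first by rewrite add0n.
exact: le_trans (obj_next_le _) IH.
Qed.

Lemma obj_ge_low k : low <= obj k.
Proof. by have := A7 (x k); rewrite hxE -EFinD lee_fin. Qed.

Lemma sigma_next_le k : sigma k.+1 <= Num.max (gam2 * sigma k) smin.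
Proof.
case/andP: gam12 => gam1_gt1 gam12'.
have sigma_gt0 : 0 < sigma k := lt_le_trans smin_gt0 (sigma_ge_smin k).
have [sig' [very succ unsucc ->]] := sigma_next k.
rewrite ge_max; apply/andP; split; last by rewrite le_max lexx orbT.
rewrite le_max; apply/orP; left.
have [rho_eta2|rho_eta2] := lerP eta2 (rho k).
  case/andP: (very rho_eta2) => _ /le_trans; apply.
  by rewrite ler_peMl ?ltW //; lra.
have [rho_eta1|rho_eta1] := lerP eta1 (rho k).
  case/andP: (succ (introT andP (conj rho_eta1 rho_eta2))) => _ /le_trans; apply.
  by rewrite ler_pM2r.
by case/andP: (unsucc rho_eta1).
Qed.

Lemma sigma_next_le_very k : eta2 <= rho k -> sigma k.+1 <= sigma k.
Proof.
move=> rho_eta2; have [sig' [very _ _ ->]] := sigma_next k.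
by case/andP: (very rho_eta2) => _ sig'_le; rewrite ge_max sig'_le sigma_ge_smin.
Qed.

Lemma sigma_next_ge_unsuccessful k : rho k < eta1 -> gam1 * sigma k <= sigma k.+1.
Proof.
move=> rho_eta1; have [sig' [_ _ unsucc ->]] := sigma_next k.
by case/andP: (unsucc rho_eta1) => sig'_ge _; rewrite le_max sig'_ge.
Qed.

Section EventuallyNonzero.
Variable K0 : nat.
Hypothesis shat_neq0 : forall k, (K0 <= k)%N -> shat k != 0.

(* Once [sigma_k] exceeds the threshold, every iteration is very successful and
   [sigma] stops growing. *)
Lemma sigma_bounded j : sigma (K0 + j) <= Num.max (sigma K0) (gam2 * sigma_thr).
Proof.
case/andP: gam12 => gam1_gt1 gam12'.
have gam2_gt0 : 0 < gam2 := lt_trans ltr01 (lt_le_trans gam1_gt1 gam12').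
elim: j => [|j IH]; first by rewrite addn0 le_max lexx.
rewrite addnS; have [thr_le|sigma_lt] := lerP sigma_thr (sigma (K0 + j)).
  apply: le_trans IH; apply/sigma_next_le_very/very_successful => //.
  exact/shat_neq0/leq_addr.
apply: le_trans (sigma_next_le _) _; rewrite ge_max !le_max sigma_ge_smin andbT.
by rewrite ler_pM2l ?(ltW sigma_lt) ?orbT.
Qed.

Lemma successful_unbounded M :
  exists2 k, (M <= k)%N & (K0 <= k)%N /\ eta1 <= rho k.
Proof.
apply: contrapT => never; set M' := maxn M K0.
have unsucc j : rho (M' + j) < eta1.
  rewrite ltNge; apply/negP => succ; apply: never; exists (M' + j).
    by rewrite (leq_trans (leq_maxl M K0)) ?leq_addr.
  by rewrite (leq_trans (leq_maxr M K0)) ?leq_addr.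
case/andP: gam12 => gam1_gt1 _.
have sigma_grows j : gam1 ^+ j * smin <= sigma (M' + j).
  elim: j => [|j IH]; first by rewrite addn0 expr0 mul1r sigma_ge_smin.
  rewrite addnS; apply: le_trans _ (sigma_next_ge_unsuccessful _ (unsucc j)).
  by rewrite exprS -mulrA ler_pM2l // (lt_trans ltr01).
have [j thr_lt] := expr_unbounded gam1 (sigma_thr / smin) gam1_gt1.
have : eta2 <= rho (M' + j).
  apply: very_successful; last first.
    by apply: shat_neq0; rewrite (leq_trans (leq_maxr M K0)) ?leq_addr.
  apply: le_trans _ (sigma_grows j); apply: ltW.
  by rewrite -ltr_pdivrMr ?smin_gt0.
by have := unsucc j; case/andP: eta12 => _ eta12'; lra.
Qed.

End EventuallyNonzero.

Lemma cauchy_steps_cvg0 (N : set nat) :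
  (forall k, N k -> eta1 <= rho k) -> cvg0_along N shat.
Proof.
move=> N_succ eps eps_gt0; apply: contrapT => no_K.
have often_large K : exists k, [/\ N k, (K <= k)%N & eps <= enorm (shat k)].
  apply: contrapT => none; apply: no_K; exists K => k Nk Kk.
  by rewrite ltNge; apply/negP => large; apply: none; exists k.
have c_gt0 : 0 < decrease_coef * eps ^+ 2 by rewrite mulr_gt0 ?exprn_gt0 ?decrease_coef_gt0.
have obj_drops j : exists M, obj M <= obj 0 - j%:R * (decrease_coef * eps ^+ 2).
  elim: j => [|j [M objM]]; first by exists 0%N; rewrite mul0r subr0.
  have [k [Nk Mk large]] := often_large M.
  exists k.+1; have := successful_decrease k (N_succ _ Nk).
  have : decrease_coef * eps ^+ 2 <= decrease_coef * enorm (shat k) ^+ 2.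
    by rewrite ler_pM2l ?decrease_coef_gt0 // ler_pXn2r ?nnegrE ?enorm_ge0 // ltW.
  by have := obj_le _ _ Mk; move: objM; rewrite -natr1; lra.
have [j j_large] := exists_nat_gt ((obj 0 - low) / (decrease_coef * eps ^+ 2)).
have [M objM] := obj_drops j; have := obj_ge_low M.
by move: j_large; rewrite ltr_pdivrMr //; lra.
Qed.

Lemma argmin_limiting_subdiff k t :
  argmin (m_cp psi (x k) (fh0 k) (gh k) (nuinv k)) t ->
  limiting_subdiff (psi^~ (x k)) t (- gh k - nuinv k *: t).
Proof.
move=> t_min; apply/frechet_limiting_subdiff/argmin_m_cp_frechet => //.
apply: fin_num_EFinD_le (t_min (shat k)) _ (psi_neq_Noo _ _).
by rewrite /m_cp fin_numD psishE.
Qed.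

(* The slack is chosen so that both it and its product with [nuinv k] vanish. *)
Definition slack k : R := (k.+1%:R * (nuinv k + 1))^-1.

Lemma slack_gt0 k : 0 < slack k.
Proof. by rewrite invr_gt0 mulr_gt0 ?ltr0Sn // ltr_wpDl ?ltW ?nuinv_gt0. Qed.

Lemma slack_le k : slack k <= k.+1%:R^-1.
Proof.
have := nuinv_gt0 k => nuinv_pos.
rewrite lef_pV2 ?posrE ?mulr_gt0 ?ltr0Sn //; last by lra.
by rewrite ler_peMr ?ler0n //; lra.
Qed.

Lemma nuinv_slack_le k : nuinv k * slack k <= k.+1%:R^-1.
Proof.
have := nuinv_gt0 k => nuinv_pos.
have -> : nuinv k * slack k = k.+1%:R^-1 * (nuinv k / (nuinv k + 1)).
  by rewrite /slack invfM; ring.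
by rewrite ler_piMr ?invr_ge0 ?ler0n // ler_pdivrMr ?mul1r; lra.
Qed.

Lemma exact_cauchy_step k : exists t,
  argmin (m_cp psi (x k) (fh0 k) (gh k) (nuinv k)) t /\
  enorm t <= enorm (shat k) / ks + slack k.
Proof.
have [A0 inf_le] := A5 k.
by have [t At t_le] := exists_enorm_near_inf A0 ks_gt0 inf_le (slack_gt0 k); exists t.
Qed.

Lemma residual_le k t A :
  enorm t <= enorm (shat k) / ks + slack k ->
  nuinv k * enorm (shat k) <= A * enorm (shat k) ->
  enorm (g (x k) + (- gh k - nuinv k *: t)) <=
    (kg * th2 + A / ks) * enorm (shat k) + k.+1%:R^-1.
Proof.
move=> t_le nuinv_le; rewrite addrA; apply: le_trans (ler_enormB _ _) _.
rewrite enormZ gtr0_norm ?nuinv_gt0 //; have [_ [_ g_err]] := A6 k.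
have g_s : kg * enorm (s k) <= kg * (th2 * enorm (shat k)).
  by apply: ler_wpM2l; [exact: ltW | exact: enorm_step_le].
have nu_t : nuinv k * enorm t <= nuinv k * (enorm (shat k) / ks + slack k).
  by apply: ler_wpM2l; [exact/ltW/nuinv_gt0 | exact: t_le].
have nu_shat : nuinv k * enorm (shat k) / ks <= A * enorm (shat k) / ks.
  by apply: ler_wpM2r; [rewrite invr_ge0 ltW | exact: nuinv_le].
have := nuinv_slack_le k; move: g_err g_s nu_t nu_shat.
by rewrite mulrDr !mulrDl !mulrA; set e := k.+1%:R^-1; lra.
Qed.

Lemma successful_subsequence K0 : (forall k, (K0 <= k)%N -> shat k != 0) ->
  exists N : set nat, [/\ infinite_set N, cvg0_along N shat &
    exists2 A, 0 <= A & forall k, N k -> nuinv k <= A].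
Proof.
move=> shat_neq0; exists [set k | (K0 <= k)%N /\ eta1 <= rho k]; split.
- exact/infinite_set_of_unbounded/successful_unbounded.
- by apply: cauchy_steps_cvg0 => k [].
case/andP: th1_01 => th1_gt0 _; set S := Num.max (sigma K0) (gam2 * sigma_thr).
have S_ge0 : 0 <= S by rewrite le_max (le_trans (ltW smin_gt0) (sigma_ge_smin K0)).
exists ((kB + S) / th1); first by rewrite divr_ge0 ?addr_ge0 // ltW.
move=> k [K0k _]; rewrite nuinvE ler_pM2r ?invr_gt0 // lerD ?A2 //.
by rewrite -(subnKC K0k) sigma_bounded.
Qed.

Lemma stationary_subsequence : exists N : set nat,
  [/\ infinite_set N, cvg0_along N shat &
    exists2 A, 0 <= A & forall k, N k -> nuinv k * enorm (shat k) <= A * enorm (shat k)].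
Proof.
have [[K0 shat_neq0]|zero_often] :=
  pselect (exists K0, forall k, (K0 <= k)%N -> shat k != 0).
  have [N [N_inf shat0 [A A0 nuinv_le]]] := successful_subsequence K0 shat_neq0.
  by exists N; split=> //; exists A => // k Nk; rewrite ler_wpM2r ?enorm_ge0 ?nuinv_le.
exists [set k | shat k = 0]; split.
- apply: infinite_set_of_unbounded => K; apply: contrapT => none; apply: zero_often.
  by exists K => k Kk; apply/eqP => shat0; apply: none; exists k.
- by move=> eps eps_gt0; exists 0%N => k -> _; rewrite enorm0.
- by exists 0 => // k ->; rewrite enorm0 !mulr0.
Qed.

Lemma iR2N_stationarity : exists N : set nat, infinite_set N /\
  exists scp u : nat -> vec,
    (forall k, N k -> scp k \in argmin (m_cp psi (x k) (fh0 k) (gh k)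
                                   (th1 / (opnorm (Bfun (x k)) + sigma k))^-1)) /\
    cvg0_along N shat /\ cvg0_along N scp /\ cvg0_along N s /\
    (forall k, N k -> exists v, limiting_subdiff (psi^~ (x k)) (scp k) v /\
                               u k = g (x k) + v) /\
    cvg0_along N u.
Proof.
have [N [N_inf shat0 [A A0 nuinv_le]]] := stationary_subsequence.
have [scp scp_spec] := choice exact_cauchy_step.
have th2_gt0 := lt_trans ltr01 th2_gt1.
have scp_le k : N k -> enorm (scp k) <= ks^-1 * enorm (shat k) + k.+1%:R^-1.
  move=> _; have [_] := scp_spec k; have := slack_le k; rewrite [_ / ks]mulrC.
  by set e := k.+1%:R^-1; lra.
have s_le k : N k -> enorm (s k) <= th2 * enorm (shat k) + k.+1%:R^-1.
  move=> _; have := enorm_step_le k; have : 0 <= k.+1%:R^-1 :> R by rewrite invr_ge0.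
  by set e := k.+1%:R^-1; lra.
set u := fun k => g (x k) + (- gh k - nuinv k *: scp k).
have u_le k : N k -> enorm (u k) <= (kg * th2 + A / ks) * enorm (shat k) + k.+1%:R^-1.
  by move=> Nk; apply: residual_le (nuinv_le k Nk); case: (scp_spec k).
exists N; split=> //; exists scp, u; split.
  by move=> k _; rewrite inE; case: (scp_spec k).
split=> //; split.
  by apply: cvg0_along_le rseq_cvg_invn scp_le shat0; rewrite invr_ge0 ltW.
split.
  by apply: cvg0_along_le rseq_cvg_invn s_le shat0; rewrite ltW.
split.
  move=> k _; exists (- gh k - nuinv k *: scp k); split=> //.
  by apply: argmin_limiting_subdiff; case: (scp_spec k).
apply: cvg0_along_le rseq_cvg_invn u_le shat0.
by rewrite addr_ge0 ?mulr_ge0 ?invr_ge0 ?(ltW kg_gt0) ?(ltW th2_gt0) ?(ltW ks_gt0).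
Qed.

End iR2N.

Arguments iR2N_stationarity {R n f g h psi Bfun kf kg gam3 gam1 gam2 eta1 eta2 th1 th2
  smin x sigma fh0 fh1 gh shat s L kB kh ks low}.

Theorem lemma3p9 (R : realType) (n : nat)
  (f : 'cV[R]_n -> R) (g : 'cV[R]_n -> 'cV[R]_n)
  (h : 'cV[R]_n -> \bar R) (psi : 'cV[R]_n -> 'cV[R]_n -> \bar R)
  (Bfun : 'cV[R]_n -> 'M[R]_n)
  (kf kg gam3 gam1 gam2 eta1 eta2 th1 th2 smin : R)
  (x : nat -> 'cV[R]_n) (sigma : nat -> R) (fh0 fh1 : nat -> R)
  (gh : nat -> 'cV[R]_n) (shat s : nat -> 'cV[R]_n) :
  (* standing assumptions *)
  C1_gradient f g ->
  proper_fun h -> lsc_fun h ->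
  (forall y, proper_fun (psi^~ y) /\ lsc_fun (psi^~ y)) ->
  (forall y, psi 0 y = h y) ->
  (forall y v, limiting_subdiff (psi^~ y) 0 v -> limiting_subdiff h y v) ->
  (exists2 lam : R, 0 < lam & forall y lam', 0 < lam' < lam ->
     exists c : R, forall w, (c%:E <= psi w y + (enorm w ^+ 2 / (2 * lam'))%:E)%E) ->
  (forall y, (Bfun y)^T = Bfun y) ->
  (* constants *)
  0 < kf -> 0 < kg -> 0 < gam3 <= 1 -> 1 < gam1 <= gam2 ->
  0 < eta1 <= eta2 -> eta2 < 1 -> 0 < th1 < 1 -> 1 < th2 ->
  4 * kf * th1 * th2 ^+ 2 / (eta1 * (1 - th1)) < smin ->
  (* the starting point lies in dom h (needed for rho_k to be defined) *)
  h (x 0%N) \is a fin_num ->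
  (* the run of the algorithm *)
  iR2N_run h psi Bfun gam3 gam1 gam2 eta1 eta2 th1 th2 smin x sigma fh0 fh1 gh shat s ->
  (* (A1) *)
  (exists2 L : R, 0 <= L & forall y t,
     `|f (y + t) - f y - dotp (g y) t| <= L / 2 * enorm t ^+ 2) ->
  (* (A2) *)
  (exists2 kB : R, 0 < kB & forall k, opnorm (Bfun (x k)) <= kB) ->
  (* (A3) *)
  (exists2 kh : R, 0 < kh & forall y t,
     (psi t y <= h (y + t)%R + (kh * enorm t ^+ 2)%:E)%E /\
     (h (y + t)%R <= psi t y + (kh * enorm t ^+ 2)%:E)%E) ->
  (* (A4) *)
  (forall k, ((1 - th1)%:E * xi_cp psi (x k) (fh0 k) (gh k) (shat k)
      <= model_decrease psi (x k) (fh0 k) (gh k) (Bfun (x k)) (s k))%E) ->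
  (* (A5) *)
  (exists2 ks : R, 0 < ks <= 1 & forall k,
     let nuk := th1 / (opnorm (Bfun (x k)) + sigma k) in
     let A := argmin (m_cp psi (x k) (fh0 k) (gh k) nuk^-1) in
     A !=set0 /\ ks * inf [set enorm t | t in A] <= enorm (shat k)) ->
  (* (A6) *)
  (forall k,
     `|f (x k) - fh0 k| <= kf * enorm (s k) ^+ 2 /\
     `|f (x k + s k) - fh1 k| <= kf * enorm (s k) ^+ 2 /\
     enorm (g (x k) - gh k) <= kg * enorm (s k)) ->
  (* (A7) *)
  (exists low : R, forall y, (low%:E <= (f y)%:E + h y)%E) ->
  exists N : set nat, infinite_set N /\
  exists scp u : nat -> 'cV[R]_n,
    (forall k, N k ->
       scp k \in argmin (m_cp psi (x k) (fh0 k) (gh k)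
                          (th1 / (opnorm (Bfun (x k)) + sigma k))^-1)) /\
    cvg0_along N shat /\ cvg0_along N scp /\
    cvg0_along N s /\
    (forall k, N k -> exists v, limiting_subdiff (psi^~ (x k)) (scp k) v /\
                               u k = g (x k) + v) /\
    cvg0_along N u.
Proof.
move=> _ [h_neq_Noo _] _ psi_proper psi0 _ _ _ kf_gt0 kg_gt0 _ gam12 eta12 eta2_lt1
  th1_01 th2_gt1 smin_large hx0_fin run [L L_ge0 A1] [kB kB_gt0 A2] [kh kh_gt0 A3] A4
  [ks /andP[ks_gt0 _] A5] A6 [low A7].
have psi_neq_Noo y w : psi w y != -oo%E by have [[]] := psi_proper y.
exact: iR2N_stationarity h_neq_Noo psi_neq_Noo psi0 kf_gt0 kg_gt0 gam12 eta12 eta2_lt1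
  th1_01 th2_gt1 smin_large hx0_fin run L_ge0 A1 kB_gt0 A2 kh_gt0 A3 A4 ks_gt0 A5 A6 A7.
Qed.
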